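(* Let $Y\in\{0,1\}$, $Z$ and $S\in\mathbb R$ be random variables on a common probability space such that $Z\perp S\mid Y$, and suppose there exists $a\in\mathbb R$ with $\mathbb P(S\le a\mid Y=1)\neq\mathbb P(S\le a\mid Y=0)$. Then $S$ is a perfect surrogate: for any measurable function $g$ of $Z$, if $Z\perp S\mid g(Z)$, then $Z\perp Y\mid g(Z)$.
   Context: A surrogate variable $S$ for $Y$ is called perfect if for every measurable function $g$ of $Z$, $Z\perp S\mid g(Z)$ implies $Z\perp Y\mid g(Z)$. *)

From HB Require Import structures.
From mathcomp Require Import all_boot all_order all_algebra.
From mathcomp Require Import all_classical all_reals all_analysis.
Set Implicit Arguments. Unset Strict Implicit. Unset Printing Implicit Defensive.
Import Order.TTheory GRing.Theory Num.Theory.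
Local Open Scope classical_set_scope.
Local Open Scope ring_scope.

(* By the Doob--Dynkin lemma every sigma(W)-measurable
   function is of the form k \o W with k measurable on the codomain of W. *)

Definition cond_prob_version {d dW} {Omega : measurableType d}
  {TW : measurableType dW} {R : realType} (P : probability Omega R)
  (W : Omega -> TW) (A : set Omega) (k : TW -> R) : Prop :=
  [/\ measurable_fun setT k,
      P.-integrable setT (fun w => (k (W w))%:E) &
      forall C, measurable C ->
        (\int[P]_(w in W @^-1` C) (k (W w))%:E = P (A `&` W @^-1` C))%E].

Definition cond_indep {d dX dV dW} {Omega : measurableType d}
  {TX : measurableType dX} {TV : measurableType dV} {TW : measurableType dW}
  {R : realType} (P : probability Omega R)
  (X : Omega -> TX) (V : Omega -> TV) (W : Omega -> TW) : Prop :=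
  forall (A : set TX) (B : set TV), measurable A -> measurable B ->
  forall kA kB kAB : TW -> R,
    cond_prob_version P W (X @^-1` A) kA ->
    cond_prob_version P W (V @^-1` B) kB ->
    cond_prob_version P W (X @^-1` A `&` V @^-1` B) kAB ->
    {ae P, forall w, kAB (W w) = kA (W w) * kB (W w)}.

Definition elem_cond_prob {d} {Omega : measurableType d} {R : realType}
  (P : probability Omega R) (A B : set Omega) : R :=
  fine (P (A `&` B)) / fine (P B).

From HB Require Import structures.
From mathcomp Require Import all_boot all_order all_algebra.
From mathcomp Require Import all_classical all_reals all_analysis.
From mathcomp Require Import ring measurable_realfun.

(* Within each stratum {Y = y}, the hypothesis Z _||_ S | Y makes {S <= a}
   independent of every event of sigma(Z), with probability F_y; as Y is binary,
   every G in sigma(Z) satisfies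
     P(G, S <= a) = F_0 P(G) + (F_1 - F_0) P(G, Y = 1).
   Events of sigma(g(Z)) lie in sigma(Z), so the same affine relation links the
   conditional probabilities given g(Z) of {S <= a} and of {Y = 1}, with or
   without intersecting with {Z in A}.  Since F_1 <> F_0 the relation can be
   inverted, and the product rule for {Z in A}, {S <= a} given g(Z) becomes the
   product rule for {Z in A}, {Y = 1}.  Every event {Y in B} is the whole space,
   the empty set, {Y = 1} or its complement, and the product rule is stable
   under complements. *)

Set Implicit Arguments.
Unset Strict Implicit.
Unset Printing Implicit Defensive.
Import Order.TTheory GRing.Theory Num.Theory.
Local Open Scope classical_set_scope.
Local Open Scope ring_scope.

Lemma measurable_preimageT (d dT : measure_display) (T : measurableType d)
  (U : measurableType dT) (f : T -> U) (B : set U) :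
  measurable_fun setT f -> measurable B -> measurable (f @^-1` B).
Proof. by move=> mf mB; rewrite -[_ @^-1` _]setTI; exact: mf. Qed.

Lemma indic_set1 (T : eqType) (R : pzRingType) (a x : T) :
  \1_[set a] x = (x == a)%:R :> R.
Proof.
rewrite indicE; case: eqP => [->|x_neq_a]; first by rewrite mem_set.
by rewrite memNset.
Qed.

Section ConditionalProbability.
Context (R : realType) (d : measure_display) (Omega : measurableType d)
  (P : probability Omega R).

Local Notation Pr E := (fine (P E)).

Lemma probability_fine E : measurable E -> P E = (Pr E)%:E.
Proof. by move=> mE; rewrite fineK // fin_num_measure. Qed.

Lemma Pr_splitC A E : measurable A -> measurable E ->
  Pr A = Pr (A `&` E) + Pr (A `&` ~` E).
Proof.
move=> mA mE; rewrite (measureDI P mA mE) setDE fineD ?fin_num_measure //.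
- by rewrite addrC.
- by apply: measurableI => //; exact: measurableC.
- exact: measurableI.
Qed.

Lemma ae_exists_in (Q : Omega -> Prop) D : measurable D -> (0 < P D)%E ->
  {ae P, forall w, Q w} -> exists2 w, D w & Q w.
Proof.
move=> mD PD [N [mN PN0 notQN]]; apply: contrapT => noDQ.
have DN : D `<=` N by move=> w Dw; apply: notQN => Qw; apply: noDQ; exists w.
have : (P D <= P N)%E by apply: le_measure; rewrite ?inE.
by rewrite PN0 leNgt PD.
Qed.

Lemma elem_cond_probK A B : Pr B != 0 -> elem_cond_prob P A B * Pr B = Pr (A `&` B).
Proof. by move=> PB_neq0; rewrite /elem_cond_prob divfK. Qed.

Section GivenW.
Context (dW : measure_display) (TW : measurableType dW) (W : Omega -> TW).
Hypothesis mW : measurable_fun setT W.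

Definition cond_indep_set (F E : set Omega) : Prop :=
  forall kF kE kFE : TW -> R,
    cond_prob_version P W F kF -> cond_prob_version P W E kE ->
    cond_prob_version P W (F `&` E) kFE ->
    {ae P, forall w, kFE (W w) = kF (W w) * kE (W w)}.

Lemma cond_prob_version_setT : cond_prob_version P W setT (fun=> 1).
Proof.
split; first exact: measurable_cst.
  exact: (finite_measure_integrable_cst P 1 measurableT).
move=> C mC; rewrite setTI integral_cst ?mul1e //.
exact: measurable_preimageT.
Qed.

Lemma cond_prob_version_lincomb E1 E2 E k1 k2 c1 c2 :
  measurable E1 -> measurable E2 -> measurable E ->
  cond_prob_version P W E1 k1 -> cond_prob_version P W E2 k2 ->
  (forall C, measurable C -> Pr (E `&` W @^-1` C) =
     c1 * Pr (E1 `&` W @^-1` C) + c2 * Pr (E2 `&` W @^-1` C)) ->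
  cond_prob_version P W E (fun t => c1 * k1 t + c2 * k2 t).
Proof.
move=> mE1 mE2 mE [mk1 ik1 int1] [mk2 ik2 int2] hE.
have lincombE : (fun w => (c1 * k1 (W w) + c2 * k2 (W w))%:E) =
    (fun w => c1%:E * (k1 (W w))%:E)%E \+ (fun w => c2%:E * (k2 (W w))%:E)%E.
  by apply/funext => w /=; rewrite EFinD !EFinM.
split.
- by apply: measurable_funD; apply: measurable_funM => //; exact: measurable_cst.
- by rewrite lincombE; apply: integrableD => //; exact: integrableZl.
move=> C mC; have mWC := measurable_preimageT mW mC.
rewrite lincombE integralD //; last 2 first.
- by apply: (integrableS measurableT) => //; exact: integrableZl.
- by apply: (integrableS measurableT) => //; exact: integrableZl.
rewrite !integralZl //; last 2 first.
- exact: (integrableS measurableT).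
- exact: (integrableS measurableT).
rewrite int1 // int2 // (probability_fine (measurableI _ _ mE1 mWC)).
rewrite (probability_fine (measurableI _ _ mE2 mWC)).
rewrite (probability_fine (measurableI _ _ mE mWC)).
by rewrite hE // EFinD !EFinM.
Qed.

(* Integrated form of [P(E' | G, W) = c0 + c1 P(E | G, W)]. *)
Definition cond_affine (G E' E : set Omega) (c0 c1 : R) : Prop :=
  forall C, measurable C -> Pr (G `&` E' `&` W @^-1` C) =
    c0 * Pr (G `&` W @^-1` C) + c1 * Pr (G `&` E `&` W @^-1` C).

Lemma cond_prob_version_affine G E' E kG kGE c0 c1 :
  measurable G -> measurable E' -> measurable E ->
  cond_prob_version P W G kG -> cond_prob_version P W (G `&` E) kGE ->
  cond_affine G E' E c0 c1 ->
  cond_prob_version P W (G `&` E') (fun t => c0 * kG t + c1 * kGE t).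
Proof.
move=> mG mE' mE vG vGE GE'E.
exact: (cond_prob_version_lincomb mG (measurableI _ _ mG mE)
  (measurableI _ _ mG mE') vG vGE GE'E).
Qed.

Lemma cond_indep_set_affine F E' E c0 c1 :
  measurable F -> measurable E' -> measurable E -> c1 != 0 ->
  cond_affine setT E' E c0 c1 -> cond_affine F E' E c0 c1 ->
  cond_indep_set F E' -> cond_indep_set F E.
Proof.
move=> mF mE' mE c1_neq0 TE'E FE'E FE' kF kE kFE vF vE vFE.
have vTE : cond_prob_version P W (setT `&` E) kE by rewrite setTI.
have vE' := cond_prob_version_affine measurableT mE' mE
  cond_prob_version_setT vTE TE'E.
have vFE' := cond_prob_version_affine mF mE' mE vF vFE FE'E.
rewrite setTI in vE'.
apply: filterS (FE' _ _ _ vF vE' vFE') => w prod'.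
apply: (mulfI c1_neq0); apply: (addrI (c0 * kF (W w))).
by rewrite prod'; ring.
Qed.

Lemma cond_affine_setC G E : measurable G -> measurable E ->
  cond_affine G E (~` E) 1 (-1).
Proof.
move=> mG mE C mC; have mWC := measurable_preimageT mW mC.
rewrite (Pr_splitC (measurableI _ _ mG mWC) mE).
have -> : G `&` W @^-1` C `&` E = G `&` E `&` W @^-1` C by rewrite setIAC.
have -> : G `&` W @^-1` C `&` ~` E = G `&` ~` E `&` W @^-1` C by rewrite setIAC.
ring.
Qed.

Lemma cond_indep_setC F E : measurable F -> measurable E ->
  cond_indep_set F E -> cond_indep_set F (~` E).
Proof.
move=> mF mE; apply: (cond_indep_set_affine (c0 := 1) (c1 := -1)) => //.
- exact: measurableC.
- exact: cond_affine_setC.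
- exact: cond_affine_setC.
Qed.

End GivenW.

Section GivenFunctionOfZ.
Context (dZ dG : measure_display) (TZ : measurableType dZ) (TG : measurableType dG)
  (Z : Omega -> TZ) (g : TZ -> TG).
Hypothesis mg : measurable_fun setT g.

Lemma cond_affine_comp E' E c0 c1 A : measurable A ->
  (forall A', measurable A' ->
     Pr (Z @^-1` A' `&` E') = c0 * Pr (Z @^-1` A') + c1 * Pr (Z @^-1` A' `&` E)) ->
  cond_affine (g \o Z) (Z @^-1` A) E' E c0 c1.
Proof.
move=> mA affineZ C mC.
have := affineZ _ (measurableI _ _ mA (measurable_preimageT mg mC)).
by rewrite preimage_setI [_ `&` E' `&` _]setIAC [_ `&` E `&` _]setIAC.
Qed.

End GivenFunctionOfZ.

Section BinaryConditioning.
Context (Y : Omega -> R).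
Hypotheses (mY : measurable_fun setT Y) (Y01 : forall w, Y w = 0 \/ Y w = 1).
Hypotheses (PY0 : (0 < P (Y @^-1` [set 0%R]))%E) (PY1 : (0 < P (Y @^-1` [set 1%R]))%E).

Local Notation "Y= y" := (Y @^-1` [set y]) (at level 10).
Local Notation cP E y := (elem_cond_prob P E (Y= y)).

Lemma measurable_Yeq y : measurable (Y= y).
Proof. exact: measurable_preimageT mY (measurable_set1 y). Qed.

Lemma Yeq0_setC : Y= 0 = ~` Y= 1.
Proof.
apply/seteqP; split=> w /=; last by case: (Y01 w).
by move=> -> /eqP; rewrite eq_sym oner_eq0.
Qed.

Lemma preimage_binary B :
  exists2 E, E = setT \/ E = Y= 1 & Y @^-1` B = E \/ Y @^-1` B = ~` E.
Proof.
have [B1|nB1] := pselect (B 1); have [B0|nB0] := pselect (B 0).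
- exists setT; [by left | left].
  by apply/seteqP; split=> w //= _; case: (Y01 w) => ->.
- exists (Y= 1); [by right | left].
  by apply/seteqP; split=> w /=; [case: (Y01 w) => -> | move=> ->].
- exists (Y= 1); [by right | right]; rewrite -Yeq0_setC.
  by apply/seteqP; split=> w /=; [case: (Y01 w) => -> | move=> ->].
- exists setT; [by left | right]; rewrite setCT.
  by apply/seteqP; split=> w //=; case: (Y01 w) => ->.
Qed.

Lemma Pr_Yeq_neq0 y : y = 0 \/ y = 1 -> Pr (Y= y) != 0.
Proof.
move=> y01; have PYy : (0 < P (Y= y))%E by case: y01 => ->.
have mYy := measurable_Yeq y.
by rewrite fine_eq0 ?fin_num_measure //; move: PYy; rewrite lt0e => /andP[].
Qed.

Lemma Pr_split_binary E : measurable E -> Pr E = Pr (E `&` Y= 0) + Pr (E `&` Y= 1).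
Proof.
by move=> mE; rewrite (Pr_splitC mE (measurable_Yeq 1)) -Yeq0_setC addrC.
Qed.

Lemma cond_prob_version_Yeq y : cond_prob_version P Y (Y= y) \1_[set y].
Proof.
split; first exact: measurable_indic (measurable_set1 y).
  exact: (integrable_indic P (measurable_Yeq y)).
move=> C mC.
by rewrite (integral_indic P (measurable_preimageT mY mC) (measurable_Yeq y)).
Qed.

Lemma Pr_setI_Yeq E C y : Pr (Y= y) != 0 ->
  Pr (E `&` Y @^-1` C `&` Y= y) = cP E y * Pr (Y= y `&` Y @^-1` C).
Proof.
move=> PYy_neq0; have [Cy|nCy] := pselect (C y).
- have -> : E `&` Y @^-1` C `&` Y= y = E `&` Y= y.
    apply/seteqP; split=> w /=; first by case=> [[]].
    by move=> [Ew Yw]; split => //; split => //; rewrite /preimage /= Yw.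
  have -> : Y= y `&` Y @^-1` C = Y= y.
    apply/seteqP; split=> w /=; first by case.
    by move=> Yw; split => //; rewrite /preimage /= Yw.
  by rewrite elem_cond_probK.
- have -> : Y= y `&` Y @^-1` C = set0.
    by apply/seteqP; split=> w //= [Yw Cw]; apply: nCy; rewrite -Yw.
  have -> : E `&` Y @^-1` C `&` Y= y = set0.
    by apply/seteqP; split=> w //= [[_ Cw] Yw]; apply: nCy; rewrite -Yw.
  by rewrite measure0 mulr0.
Qed.

(* Off the values [0] and [1] both sides are [0/0 = 0]. *)
Lemma elem_cond_prob_Yeq E t : cP E t = cP E 1 * \1_[set 1] t + cP E 0 * \1_[set 0] t.
Proof.
rewrite !indic_set1; have [->|t_neq1] := eqVneq t 1.
  by rewrite oner_eq0 mulr1 mulr0 addr0.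
have [->|t_neq0] := eqVneq t 0; first by rewrite mulr1 mulr0 add0r.
have -> : Y= t = set0.
  apply/seteqP; split=> w //= Yw; move: t_neq1 t_neq0; rewrite -Yw.
  by case: (Y01 w) => ->; rewrite eqxx.
by rewrite /elem_cond_prob setI0 measure0 !mulr0 mul0r addr0.
Qed.

Lemma elem_cond_prob_version E : measurable E ->
  cond_prob_version P Y E (fun t => cP E t).
Proof.
move=> mE; rewrite (funext (elem_cond_prob_Yeq E)).
apply: (cond_prob_version_lincomb mY (measurable_Yeq 1) (measurable_Yeq 0) mE
  (cond_prob_version_Yeq 1) (cond_prob_version_Yeq 0)) => C mC.
rewrite Pr_split_binary; last exact: (measurableI _ _ mE (measurable_preimageT mY mC)).
have PY0_neq0 : Pr (Y= 0) != 0 by apply: Pr_Yeq_neq0; left.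
have PY1_neq0 : Pr (Y= 1) != 0 by apply: Pr_Yeq_neq0; right.
by rewrite !Pr_setI_Yeq // addrC.
Qed.

Lemma cond_indep_binary_elem F E y : measurable F -> measurable E ->
  y = 0 \/ y = 1 -> cond_indep_set Y F E -> cP (F `&` E) y = cP F y * cP E y.
Proof.
move=> mF mE y01 indepFE.
have PYy : (0 < P (Y= y))%E by case: y01 => ->.
have := indepFE _ _ _ (elem_cond_prob_version mF) (elem_cond_prob_version mE)
  (elem_cond_prob_version (measurableI _ _ mF mE)).
by case/(ae_exists_in (measurable_Yeq y) PYy) => w /= ->.
Qed.

Lemma cond_indep_binary_affine F E : measurable F -> measurable E ->
  cond_indep_set Y F E ->
  Pr (F `&` E) = cP E 0 * Pr F + (cP E 1 - cP E 0) * Pr (F `&` Y= 1).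
Proof.
move=> mF mE indepFE.
have atom y : y = 0 \/ y = 1 -> Pr (F `&` E `&` Y= y) = cP E y * Pr (F `&` Y= y).
  move=> y01; have PYy_neq0 := Pr_Yeq_neq0 y01.
  rewrite -(elem_cond_probK (F `&` E) PYy_neq0) -(elem_cond_probK F PYy_neq0).
  by rewrite (cond_indep_binary_elem mF mE y01 indepFE) mulrAC mulrC.
rewrite Pr_split_binary ?(Pr_split_binary mF); last exact: measurableI.
rewrite !atom; [ring|by [left|right]..].
Qed.

End BinaryConditioning.
End ConditionalProbability.

Theorem proposition2 (R : realType) (d dZ : measure_display)
  (Omega : measurableType d) (TZ : measurableType dZ)
  (P : probability Omega R)
  (Y : Omega -> R) (Z : Omega -> TZ) (S : Omega -> R) :
  measurable_fun setT Y -> measurable_fun setT Z -> measurable_fun setT S ->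
  (forall w, Y w = 0 \/ Y w = 1) ->
  (0 < P [set w | Y w = 1%R])%E -> (0 < P [set w | Y w = 0%R])%E ->
  cond_indep P Z S Y ->
  (exists a : R,
     elem_cond_prob P [set w | S w <= a] [set w | Y w = 1%R] <>
     elem_cond_prob P [set w | S w <= a] [set w | Y w = 0%R]) ->
  forall (dG : measure_display) (TG : measurableType dG) (g : TZ -> TG),
    measurable_fun setT g ->
    cond_indep P Z S (g \o Z) -> cond_indep P Z Y (g \o Z).
Proof.
move=> mY mZ mS Y01 PY1 PY0 indepZS_Y [a Fa] dG TG g mg indepZS_gZ A B mA mB.
have mgZ : measurable_fun setT (g \o Z) by exact: measurableT_comp.
have mZA := measurable_preimageT mZ mA.
have m_le_a : measurable [set x : R | x <= a] by rewrite -set_itvNyc.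
pose Sa := S @^-1` [set x | x <= a].
have mSa : measurable Sa := measurable_preimageT mS m_le_a.
pose F y := elem_cond_prob P Sa (Y @^-1` [set y]).
have affineZ A' : measurable A' -> fine (P (Z @^-1` A' `&` Sa)) =
    F 0 * fine (P (Z @^-1` A')) + (F 1 - F 0) * fine (P (Z @^-1` A' `&` Y @^-1` [set 1])).
  move=> mA'; apply: cond_indep_binary_affine => //.
    exact: measurable_preimageT.
  exact: indepZS_Y.
have indepZA_Y1 : cond_indep_set P (g \o Z) (Z @^-1` A) (Y @^-1` [set 1]).
  apply: (cond_indep_set_affine mgZ mZA mSa (measurable_preimageT mY (measurable_set1 _))
    (c0 := F 0) (c1 := F 1 - F 0)).
  - by rewrite subr_eq0; apply/eqP.
  - by rewrite -(preimage_setT Z); exact: cond_affine_comp.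
  - exact: cond_affine_comp.
  - exact: indepZS_gZ.
have indepZA_T : cond_indep_set P (g \o Z) (Z @^-1` A) setT.
  by rewrite -(preimage_setT S); exact: indepZS_gZ.
have [E E_cases [->|->]] := preimage_binary Y01 B; first by case: E_cases => ->.
apply: cond_indep_setC => //; case: E_cases => -> //.
exact: measurable_preimageT (measurable_set1 _).
Qed.
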